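(* (The push-forward formula for a product.) For all $f,g\in S$ and $u\in W$, the following identity holds in $Z$: \[ \pi\bullet\big(c(f)\cdot c(g)\big)=\sum_{w,v\in W}Y_{I_w}(f)\cdot u\big(Y_{I_v}(g)\big)\cdot\Big(\pi\bullet\big(\zeta^\vee_{I_w}\cdot\zeta(u)^\vee_{I_v}\big)\Big). \]
   Context: Setting: $\Phi$ a finite real root system (simple roots $\Pi$, positive/negative roots $\Phi_\pm$, Coxeter group $W$), $\mathcal O$ its coefficient ring, $\Lambda$ a free $\mathcal O$-module between root and weight lattices; $F$ a one-dimensional commutative formal group law over a commutative ring $R$; $S$ the formal group ring ($R[[x_\lambda]]_{\lambda\in\Lambda}$ modulo the closure of $x_0=0$, $x_{\lambda+\mu}=F(x_\lambda,x_\mu)$; no completion if $F$ polynomial; non-crystallographic case: $F$ additive, $R=\mathcal O$, $S=\mathrm{Sym}_{\mathcal O}\Lambda$), $W$ acting by $w(x_\lambda)=x_{w(\lambda)}$. Assume all $x_\alpha$ regular and $x_\alpha\mid x_{\alpha'}f\Rightarrow x_\alpha\mid f$ for distinct positive $\alpha,\alpha'$. $Q=S[1/x_\alpha]$; $Q_W$ twisted group algebra (basis $\delta_w$, $\delta_wq=w(q)\delta_w$) acting on $Q$ by $q\delta_w(f)=qw(f)$; $Y_\alpha=\frac1{x_{-\alpha}}+\frac1{x_\alpha}\delta_{s_\alpha}$ (so $Y_\alpha(f)=\frac f{x_{-\alpha}}+\frac{s_\alpha f}{x_\alpha}$), $Y_i=Y_{\alpha_i}$; fixed reduced words $I_w$,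 $Y_{I_w}$ the product, $I_w^{-1}$ reversed. $\mathbb D\subset Q_W$ generated by $S$ and the $Y_i$, free over $S$ on $\{Y_{I_w}\}$. $Z=\{(z_v)_v\in\bigoplus_{v\in W}S:z_{s_\alpha w}-z_w\in x_\alpha S\}$ (coordinatewise product), identified with $\mathrm{Hom}_S(\mathbb D,S)$ via $\phi\mapsto(\phi(\delta_v))_v$; Hecke action $q\delta_w\bullet(z_v)=(v(q)z_{vw})$, Weyl action $q\delta_w\odot(z_v)=(qw(z_{w^{-1}v}))$; $c(f)=(v(f))_v$. $x_\Pi=\prod_{\alpha\in\Phi_-}x_\alpha$; $\pi=\sum_w\frac1{w(x_\Pi)}\delta_w$ acting on $Z$ by $\bullet$. $\zeta^\vee_{I_w}\in Z$ corresponds to the functional on $\mathbb D$ with $Y_{I_u}\mapsto\delta^{Kr}_{w,u}$; $\zeta(u)^\vee_{I_w}=\delta_u\odot\zeta^\vee_{I_w}$. *)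

From HB Require Import structures.
From mathcomp Require Import all_boot all_order all_algebra.
From mathcomp Require Import boolp reals.
Set Implicit Arguments. Unset Strict Implicit. Unset Printing Implicit Defensive.
Import Order.TTheory GRing.Theory Num.Theory.
Local Open Scope ring_scope.

Section RootSystem.
Variables (R : realType) (m : nat).
Local Notation vec := 'cV[R]_m.
Local Notation mat := 'M[R]_m.

Definition dotv (a b : vec) : R := (a^T *m b) 0 0.

Definition refl (a : vec) : mat := 1%:M - (2 / dotv a a) *: (a *m a^T).

(* finite (real, possibly non-crystallographic) reduced root system *)
Definition is_root_system (Phi : seq vec) : Prop :=
  [/\ uniq Phi, 0 \notin Phi,
      forall a, a \in Phi -> forall c : R, (c *: a \in Phi) = (c == 1) || (c == -1)
    & forall a b, a \in Phi -> b \in Phi -> refl a *m b \in Phi].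

Definition comb (Pi : seq vec) (c : nat -> R) : vec := \sum_(i < size Pi) c i *: Pi`_i.

Definition pos_root (Phi Pi : seq vec) (a : vec) : Prop :=
  a \in Phi /\ exists c : nat -> R, (forall i, 0 <= c i) /\ a = comb Pi c.
Definition neg_root (Phi Pi : seq vec) (a : vec) : Prop :=
  a \in Phi /\ exists c : nat -> R, (forall i, c i <= 0) /\ a = comb Pi c.

Definition Pi_mx (Pi : seq vec) : 'M[R]_(size Pi, m) := \matrix_(i < size Pi, j < m) Pi`_i j 0.

Definition is_simple_system (Phi Pi : seq vec) : Prop :=
  [/\ {subset Pi <= Phi}, row_free (Pi_mx Pi)
    & forall a, a \in Phi -> pos_root Phi Pi a \/ neg_root Phi Pi a].

Definition wprod (s : seq vec) : mat := foldr (fun a M => refl a *m M) 1%:M s.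

Definition enumW (Phi : seq vec) (Wl : seq mat) : Prop :=
  uniq Wl /\ forall w, w \in Wl <-> exists s, {subset s <= Phi} /\ wprod s = w.

Definition reduced_word (Pi : seq vec) (s : seq vec) (w : mat) : Prop :=
  [/\ {subset s <= Pi}, wprod s = w
    & forall s', {subset s' <= Pi} -> wprod s' = w -> (size s <= size s')%N].

Definition is_W_action (Wl : seq mat) (T : pzRingType) (act : mat -> T -> T) : Prop :=
  [/\ forall w, w \in Wl -> forall a b, act w (a + b) = act w a + act w b,
      forall w, w \in Wl -> forall a b, act w (a * b) = act w a * act w b,
      forall w, w \in Wl -> act w 1 = 1,
      forall a, act 1%:M a = a
    & forall v w, v \in Wl -> w \in Wl -> forall a, act (v *m w) a = act v (act w a)].

Section Operators.
Variables (Q : comUnitRingType) (actQ : mat -> Q -> Q) (xq : vec -> Q) (Wl : seq mat).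

Definition Yop (a : vec) (q : Q) : Q := q / xq (- a) + actQ (refl a) q / xq a.
Definition YI (s : seq vec) (q : Q) : Q := foldr Yop q s.

(* elements of Q_W as coefficient functions W -> Q (p = sum_w p(w) delta_w) *)
Definition qw_delta (a : mat) : mat -> Q := fun b => (b == a)%:R.
Definition qw_mul (p q : mat -> Q) : mat -> Q :=
  fun c => \sum_(a <- Wl) \sum_(b <- Wl | a *m b == c) p a * actQ a (q b).
Definition qw_Y (a : vec) : mat -> Q :=
  fun b => (b == 1%:M)%:R / xq (- a) + (b == refl a)%:R / xq a.
Definition qw_YI (s : seq vec) : mat -> Q :=
  foldr (fun a p => qw_mul (qw_Y a) p) (qw_delta 1%:M) s.

(* elements of Z as coordinate functions (z_v)_v *)
Definition cZ (q : Q) : mat -> Q := fun v => actQ v q.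
Definition zmul (z1 z2 : mat -> Q) : mat -> Q := fun v => z1 v * z2 v.
Definition zscale (q : Q) (z : mat -> Q) : mat -> Q := fun v => q * z v.

Definition xPi (Phi Pi : seq vec) : Q := \prod_(a <- Phi | `[< neg_root Phi Pi a >]) xq a.

(* pi = sum_w 1/w(x_Pi) delta_w acting by the Hecke action:
   (q delta_w . z)_v = v(q) z_{vw} *)
Definition pi_act (xP : Q) (z : mat -> Q) : mat -> Q :=
  fun v => \sum_(w <- Wl) actQ v (actQ w xP)^-1 * z (v *m w).

(* Weyl action of delta_u : (delta_u (.) z)_v = u(z_{u^-1 v}) *)
Definition odot (u : mat) (z : mat -> Q) : mat -> Q := fun v => actQ u (z (invmx u *m v)).

(* matrix of Y_{I_u} = sum_v B_{u,v} delta_v, indexed by positions in Wl *)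
Definition Bmx (I : mat -> seq vec) : 'M[Q]_(size Wl) :=
  \matrix_(i < size Wl, k < size Wl) qw_YI (I (Wl`_i)) (Wl`_k).

(* zeta^vee_{I_w}: the functional on D with Y_{I_u} |-> delta_{w,u},
   i.e. (zeta_w)_v = phi(delta_v), so that sum_v B_{u,v} (zeta_w)_v = delta_{w,u} *)
Definition zeta (I : mat -> seq vec) (w : mat) : mat -> Q :=
  fun v => \sum_(i < size Wl) \sum_(k < size Wl | (Wl`_k == v) && (Wl`_i == w))
             invmx (Bmx I) k i.

End Operators.
End RootSystem.

From HB Require Import structures.
From mathcomp Require Import all_boot all_order all_algebra.
From mathcomp Require Import boolp reals ring.
From mathcomp Require Import fingroup perm.
Set Implicit Arguments. Unset Strict Implicit. Unset Printing Implicit Defensive.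
Import Order.TTheory GRing.Theory Num.Theory.
Local Open Scope ring_scope.

(* Write Y_{I_w} = sum_v B_{w,v} delta_v in Q_W. The entry B_{w,v} vanishes unless v is
   the product of a subword of I_w; since the words I_w are reduced, B is triangular with
   respect to word length, and its diagonal entries are products of W-translates of the
   units 1/x_a. Hence B is invertible and the zeta_w, being the columns of B^-1, give the
   expansion y(q) = sum_w Y_{I_w}(q) zeta_w(y) for every y in W. Expanding (vy)(f) this way
   and (vy)(g) = u((u^-1 v y)(g)) likewise, inside the sum over y defining pi, yields the
   formula. *)

Lemma big_pred1_seq (T : eqType) (V : nmodType) (r : seq T) (F : T -> V) c :
  uniq r -> c \in r -> \sum_(v <- r | v == c) F v = F c.
Proof. by move=> r_uniq c_r; rewrite -big_filter filter_pred1_uniq // big_seq1. Qed.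

Lemma big_delta_seq (T : eqType) (V : pzSemiRingType) (r : seq T) (F : T -> V) c :
  uniq r -> c \in r -> \sum_(v <- r) (v == c)%:R * F v = F c.
Proof.
move=> r_uniq c_r; rewrite (bigD1_seq c) //= eqxx mul1r big1 ?addr0 //.
by move=> v /negPf->; rewrite mul0r.
Qed.

Lemma det_weight_trig (T : comPzRingType) n (A : 'M[T]_n) (L : 'I_n -> nat) :
  (forall i k, A i k != 0 -> k = i \/ (L k < L i)%N) -> \det A = \prod_i A i i.
Proof.
move=> A_trig; rewrite /determinant (bigD1 1%g) //= odd_perm1 mul1r.
rewrite [X in _ + X]big1 ?addr0; first by apply: eq_bigr => i _; rewrite perm1.
move=> s s_neq1; have [i /eqP Ai0|A_nz] := pickP (fun i => A i (s i) == 0).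
  by rewrite (bigD1 i) //= Ai0 mul0r mulr0.
have As_neq0 i : A i (s i) != 0 by rewrite A_nz.
have le_L i : (L (s i) <= L i)%N by case: (A_trig _ _ (As_neq0 i)) => [->|/ltnW].
have [j sj_neq_j] : exists j, s j != j.
  apply/existsP; apply: contraNT s_neq1 => /existsPn s_id.
  by apply/eqP/permP => i; rewrite perm1; apply/eqP/negPn/s_id.
have lt_L : (L (s j) < L j)%N.
  by case: (A_trig _ _ (As_neq0 j)) => // sjE; rewrite sjE eqxx in sj_neq_j.
suff : (\sum_i L (s i) < \sum_i L i)%N.
  by rewrite [X in (_ < X)%N](reindex_inj (@perm_inj _ s)) ltnn.
rewrite (bigD1 j) //= [X in (_ < X)%N](bigD1 j) //= -addSn.
by apply: leq_add => //; apply: leq_sum => i _.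
Qed.

Section Reflections.
Variables (R : realType) (m : nat).
Implicit Types (a : 'cV[R]_m) (s t : seq 'cV[R]_m).

Lemma dotv_neq0 a : a != 0 -> dotv a a != 0.
Proof.
apply: contraNneq; rewrite /dotv mxE => /eqP.
rewrite psumr_eq0 => [/allP a2_eq0|i _]; last by rewrite mxE -expr2 sqr_ge0.
apply/eqP/matrixP => i k; rewrite ord1 !mxE.
by have := a2_eq0 i (mem_index_enum _); rewrite mxE mulf_eq0 orbb => /eqP.
Qed.

Lemma reflK a : a != 0 -> refl a *m refl a = 1%:M.
Proof.
move=> /dotv_neq0 d_neq0; rewrite /refl; set d := dotv a a; set c := 2 / d.
have aaT_sq : (a *m a^T) *m (a *m a^T) = d *: (a *m a^T).
  by rewrite mulmxA -(mulmxA a) [a^T *m a]mx11_scalar mul_mx_scalar scalemxAl.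
rewrite mulmxBl mul1mx mulmxBr mulmx1 -scalemxAl -scalemxAr aaT_sq !scalerA.
have -> : c * c * d = c + c by rewrite -mulrA /c divfK // mulr_natr mulr2n.
by rewrite scalerDl opprB addrK subrK.
Qed.

Lemma refl_mulmx_eq a (b c : 'M[R]_m) : a != 0 -> (refl a *m b == c) = (b == refl a *m c).
Proof.
move=> a_neq0; apply/eqP/eqP => [<-|->]; by rewrite mulmxA reflK // mul1mx.
Qed.

Lemma wprod_cat s t : wprod (s ++ t) = wprod s *m wprod t.
Proof. by elim: s => [|a s IHs] /=; rewrite ?mul1mx // IHs mulmxA. Qed.

Lemma wprod_rev_mul s : 0 \notin s -> wprod (rev s) *m wprod s = 1%:M.
Proof.
elim: s => [|a s IHs] /=; first by rewrite mul1mx.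
rewrite inE negb_or eq_sym => /andP[a_neq0 s_neq0].
rewrite rev_cons -cats1 wprod_cat /= mulmx1 -mulmxA (mulmxA (refl a)) reflK //.
by rewrite mul1mx IHs.
Qed.

Lemma reduced_word_behead (Pi : seq 'cV[R]_m) a s w :
  reduced_word Pi (a :: s) w -> reduced_word Pi s (wprod s).
Proof.
case=> as_Pi <- as_min; have a_Pi : a \in Pi by rewrite as_Pi ?mem_head.
have s_Pi : {subset s <= Pi} by move=> b bs; rewrite as_Pi // inE bs orbT.
split=> // t t_Pi wt_eq; have /= := as_min (a :: t); rewrite wt_eq ltnS; apply=> // b.
by rewrite inE => /orP[/eqP->|/t_Pi].
Qed.

End Reflections.

Section WeylGroup.
Variables (R : realType) (m : nat) (Phi : seq 'cV[R]_m) (Wl : seq 'M[R]_m).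
Hypothesis Phi_neq0 : 0 \notin Phi.
Hypothesis WlP : forall w, w \in Wl <-> exists s, {subset s <= Phi} /\ wprod s = w.

Lemma wprod_in s : {subset s <= Phi} -> wprod s \in Wl.
Proof. by move=> s_Phi; apply/WlP; exists s. Qed.

Lemma mx1_in : 1%:M \in Wl.
Proof. exact: (@wprod_in [::]). Qed.

Lemma refl_in a : a \in Phi -> refl a \in Wl.
Proof.
move=> a_Phi; have /= := @wprod_in [:: a]; rewrite mulmx1; apply=> b.
by rewrite inE => /eqP->.
Qed.

Lemma mulmx_in v w : v \in Wl -> w \in Wl -> v *m w \in Wl.
Proof.
move=> /WlP[s [s_Phi <-]] /WlP[t [t_Phi <-]]; rewrite -wprod_cat; apply: wprod_in.
by move=> b; rewrite mem_cat => /orP[/s_Phi|/t_Phi].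
Qed.

Lemma unitmx_invmx_in u : u \in Wl -> u \in unitmx /\ invmx u \in Wl.
Proof.
move=> /WlP[s [s_Phi <-]]; have s_neq0 : 0 \notin s by apply: contra Phi_neq0 => /s_Phi.
have wrev_mul := wprod_rev_mul s_neq0; have [_ ws_unit] := mulmx1_unit wrev_mul.
suff -> : invmx (wprod s) = wprod (rev s).
  by split=> //; apply: wprod_in => b; rewrite mem_rev => /s_Phi.
by rewrite -[LHS]mul1mx -wrev_mul -mulmxA mulmxV ?mulmx1.
Qed.

End WeylGroup.

Section WeylAction.
Variables (R : realType) (m : nat) (Wl : seq 'M[R]_m).
Variables (T : pzRingType) (act : 'M[R]_m -> T -> T).
Hypothesis act_W : is_W_action Wl act.

Lemma actD w : w \in Wl -> forall a b, act w (a + b) = act w a + act w b.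
Proof. by case: act_W => + _ _ _ _; apply. Qed.
Lemma actM w : w \in Wl -> forall a b, act w (a * b) = act w a * act w b.
Proof. by case: act_W => _ + _ _ _; apply. Qed.
Lemma act1 w : w \in Wl -> act w 1 = 1.
Proof. by case: act_W => _ _ + _ _; apply. Qed.
Lemma act1mx a : act 1%:M a = a.
Proof. by case: act_W => _ _ _ + _; apply. Qed.
Lemma act_mulmx v w : v \in Wl -> w \in Wl -> forall a, act (v *m w) a = act v (act w a).
Proof. by case: act_W => _ _ _ _; apply. Qed.

Lemma act0 w : w \in Wl -> act w 0 = 0.
Proof. by move=> w_W; apply: (@addrI _ (act w 0)); rewrite -actD // !addr0. Qed.

Lemma act_sum w (J : Type) (r : seq J) (P : pred J) (F : J -> T) : w \in Wl ->
  act w (\sum_(i <- r | P i) F i) = \sum_(i <- r | P i) act w (F i).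
Proof.
move=> w_W; elim: r => [|i r IHr]; first by rewrite !big_nil act0.
by rewrite !big_cons; case: (P i); rewrite ?actD ?IHr.
Qed.

End WeylAction.

Lemma act_unit (R : realType) m (Wl : seq 'M[R]_m) (T : unitRingType) act w (q : T) :
  is_W_action Wl act -> w \in Wl -> q \is a GRing.unit -> act w q \is a GRing.unit.
Proof.
move=> act_W w_W q_unit; apply/unitrP; exists (act w q^-1).
by rewrite -!(actM act_W) // mulVr // mulrV // (act1 act_W).
Qed.

Section DemazureOperators.
Variables (R : realType) (m : nat) (Phi Pi : seq 'cV[R]_m) (Wl : seq 'M[R]_m).
Variables (I : 'M[R]_m -> seq 'cV[R]_m) (Q : comUnitRingType).
Variables (actQ : 'M[R]_m -> Q -> Q) (xq : 'cV[R]_m -> Q).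
Hypothesis Phi_neq0 : 0 \notin Phi.
Hypothesis Pi_Phi : {subset Pi <= Phi}.
Hypothesis Wl_uniq : uniq Wl.
Hypothesis WlP : forall w, w \in Wl <-> exists s, {subset s <= Phi} /\ wprod s = w.
Hypothesis I_reduced : forall w, w \in Wl -> reduced_word Pi (I w) w.
Hypothesis actQ_W : is_W_action Wl actQ.
Hypothesis xq_unit : forall a, a \in Phi -> xq a \is a GRing.unit.

Local Notation mx1_in := (mx1_in WlP).
Local Notation refl_in := (refl_in WlP).
Local Notation mulmx_in := (mulmx_in WlP).
Local Notation wprod_in := (wprod_in WlP).
Local Notation actM := (actM actQ_W).
Local Notation act0 := (act0 actQ_W).
Local Notation act1mx := (act1mx actQ_W).
Local Notation act_mulmx := (act_mulmx actQ_W).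
Local Notation act_sum := (act_sum actQ_W).
Local Notation act_unit := (act_unit actQ_W).

Definition qw_eval (p : 'M[R]_m -> Q) (q : Q) : Q := \sum_(v <- Wl) p v * actQ v q.

Lemma qw_eval_mul p r q : qw_eval (qw_mul actQ Wl p r) q = qw_eval p (qw_eval r q).
Proof.
rewrite /qw_eval /qw_mul; under eq_bigr do rewrite big_distrl /=.
rewrite exchange_big /=; apply: eq_big_seq => a a_W.
rewrite act_sum // big_distrr /=; under eq_bigr do rewrite big_distrl big_mkcond /=.
rewrite exchange_big /=; apply: eq_big_seq => b b_W; rewrite -big_mkcond /=.
under eq_bigl do rewrite eq_sym.
by rewrite big_pred1_seq ?mulmx_in // act_mulmx // actM // mulrA.
Qed.

Lemma qw_eval_delta1 q : qw_eval (qw_delta Q 1%:M) q = q.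
Proof. by rewrite /qw_eval big_delta_seq ?mx1_in ?act1mx. Qed.

Lemma qw_eval_Y a q : a \in Phi -> qw_eval (qw_Y xq a) q = Yop actQ xq a q.
Proof.
move=> a_Phi; rewrite /qw_eval /qw_Y /Yop.
under eq_bigr do rewrite mulrDl [_ / xq (- a) * _]mulrAC [_ / xq a * _]mulrAC -!mulrA.
by rewrite big_split /= !big_delta_seq ?mx1_in ?refl_in ?act1mx.
Qed.

Lemma YI_qw_eval s q : {subset s <= Phi} -> YI actQ xq s q = qw_eval (qw_YI actQ xq Wl s) q.
Proof.
elim: s => [|a s IHs] as_Phi /=; first by rewrite qw_eval_delta1.
have s_Phi : {subset s <= Phi} by move=> b bs; rewrite as_Phi // inE bs orbT.
by rewrite qw_eval_mul -IHs // qw_eval_Y // as_Phi ?mem_head.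
Qed.


Lemma qw_mul_Y a p c : a \in Phi -> c \in Wl ->
  qw_mul actQ Wl (qw_Y xq a) p c = p c / xq (- a) + actQ (refl a) (p (refl a *m c)) / xq a.
Proof.
move=> a_Phi c_W; have a_neq0 : a != 0 by apply: contraNneq Phi_neq0 => <-.
rewrite /qw_mul /qw_Y; under eq_bigr do rewrite -big_distrr /=.
under eq_bigr do rewrite mulrDl -!mulrA.
rewrite big_split /= !big_delta_seq ?mx1_in ?refl_in // [p c / _]mulrC [actQ _ _ / _]mulrC.
congr (_ * _ + _ * _).
  under eq_bigl do rewrite mul1mx.
  by rewrite big_pred1_seq // act1mx.
under eq_bigl do rewrite refl_mulmx_eq //.
by rewrite big_pred1_seq ?mulmx_in ?refl_in.
Qed.

Lemma qw_YI_support s c : {subset s <= Phi} -> c \in Wl ->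
  qw_YI actQ xq Wl s c != 0 -> exists2 t, subseq t s & wprod t = c.
Proof.
elim: s c => [|a s IHs] c as_Phi c_W /=.
  by rewrite /qw_delta /=; case: (c == 1%:M) / eqP => [-> _|_]; [exists [::] | rewrite eqxx].
have a_Phi : a \in Phi by rewrite as_Phi ?mem_head.
have s_Phi : {subset s <= Phi} by move=> b bs; rewrite as_Phi // inE bs orbT.
have a_neq0 : a != 0 by apply: contraNneq Phi_neq0 => <-.
rewrite qw_mul_Y //.
have [pc_eq0|/(IHs c s_Phi c_W)[t ts <-]] := eqVneq (qw_YI actQ xq Wl s c) 0; last first.
  by exists t => //; apply: subseq_trans ts (subseq_cons s a).
rewrite pc_eq0 mul0r add0r => pac_neq0.
have ac_W : refl a *m c \in Wl by rewrite mulmx_in ?refl_in.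
have pac'_neq0 : qw_YI actQ xq Wl s (refl a *m c) != 0.
  by apply: contraNneq pac_neq0 => ->; rewrite act0 ?refl_in ?mul0r.
have [t ts wt_eq] := IHs _ s_Phi ac_W pac'_neq0.
by exists (a :: t); rewrite /= ?eqxx // wt_eq mulmxA reflK ?mul1mx.
Qed.

Lemma qw_YI_diag_unit s : reduced_word Pi s (wprod s) ->
  qw_YI actQ xq Wl s (wprod s) \is a GRing.unit.
Proof.
elim: s => [|a s IHs] as_red /=; first by rewrite /qw_delta eqxx unitr1.
have s_red := reduced_word_behead as_red; have [as_Pi _ as_min] := as_red.
have a_Phi : a \in Phi by rewrite Pi_Phi ?as_Pi ?mem_head.
have s_Phi : {subset s <= Phi} by move=> b bs; rewrite Pi_Phi // as_Pi // inE bs orbT.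
have a_neq0 : a != 0 by apply: contraNneq Phi_neq0 => <-.
rewrite qw_mul_Y ?mulmx_in ?refl_in ?wprod_in // mulmxA reflK // mul1mx.
(* refl a *m wprod s has length size s + 1, so it is no product of a subword of s. *)
suff -> : qw_YI actQ xq Wl s (refl a *m wprod s) = 0.
  by rewrite mul0r add0r unitrM unitrV xq_unit // act_unit ?refl_in ?IHs.
apply/eqP; apply: contraT => /qw_YI_support[||t ts wt_eq]; rewrite ?mulmx_in ?refl_in ?wprod_in //.
have t_Pi : {subset t <= Pi} by move=> b /(mem_subseq ts) bs; rewrite as_Pi // inE bs orbT.
by have /= := as_min t t_Pi wt_eq; rewrite ltnNge size_subseq.
Qed.

Local Notation n := (size Wl).
Local Notation B := (Bmx actQ xq Wl I).

Lemma nth_in (k : 'I_n) : Wl`_k \in Wl.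
Proof. exact: mem_nth. Qed.

Lemma nth_eq (k k' : 'I_n) : (Wl`_k == Wl`_k') = (k == k').
Proof. exact: nth_uniq. Qed.

Lemma I_Phi w : w \in Wl -> {subset I w <= Phi}.
Proof. by move=> w_W b; have [I_Pi _ _] := I_reduced w_W; move/I_Pi/Pi_Phi. Qed.

Lemma Bmx_trig i k : B i k != 0 -> k = i \/ (size (I Wl`_k) < size (I Wl`_i))%N.
Proof.
rewrite mxE => Bik_neq0; have [Ii_Pi Ii_w _] := I_reduced (nth_in i).
have [t tI wt_eq] := qw_YI_support (I_Phi (nth_in i)) (nth_in k) Bik_neq0.
have /leqifP := size_subseq_leqif tI; case: eqP => [tE _|_ lt_t].
  by left; apply/eqP; rewrite -nth_eq -wt_eq tE Ii_w.
have [_ _ Ik_min] := I_reduced (nth_in k); right; apply: leq_ltn_trans lt_t.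
by apply: Ik_min wt_eq => b /(mem_subseq tI)/Ii_Pi.
Qed.

Lemma Bmx_unit : B \in unitmx.
Proof.
rewrite unitmxE (@det_weight_trig _ _ B (fun k => size (I Wl`_k)) Bmx_trig).
apply: unitr_prod => i _; have [_ Ii_w _] := I_reduced (nth_in i).
by rewrite mxE -{2}Ii_w qw_YI_diag_unit // Ii_w; apply: I_reduced (nth_in i).
Qed.

Lemma zeta_nth (i k : 'I_n) : zeta actQ xq Wl I Wl`_i Wl`_k = invmx B k i.
Proof.
rewrite /zeta (bigD1 i) //= [X in _ + X]big1 ?addr0 => [|i' /negPf i'_neq_i].
  by rewrite (big_pred1 k) // => k'; rewrite !nth_eq eqxx andbT.
by rewrite big_pred0 // => k'; rewrite !nth_eq i'_neq_i andbF.
Qed.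

Lemma act_zeta_expansion y q : y \in Wl ->
  actQ y q = \sum_(w <- Wl) YI actQ xq (I w) q * zeta actQ xq Wl I w y.
Proof.
move=> y_W; pose k0 : 'I_n := Ordinal (etrans (index_mem y Wl) y_W).
have -> : y = Wl`_k0 by rewrite nth_index.
pose Acol := \col_(k < n) actQ Wl`_k q.
have B_Acol : B *m Acol = \col_i YI actQ xq (I Wl`_i) q.
  apply/colP => i; rewrite !mxE YI_qw_eval; last exact: I_Phi (nth_in i).
  rewrite /qw_eval (big_nth 0) big_mkord.
  by apply: eq_bigr => k _; rewrite !mxE.
transitivity (Acol k0 0); first by rewrite mxE.
rewrite -(mulKmx Bmx_unit Acol) B_Acol mxE (big_nth 0) big_mkord.
by apply: eq_bigr => i _; rewrite zeta_nth mxE mulrC.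
Qed.

Lemma pi_act_cZ_mul (xP f g : Q) u v : u \in Wl -> v \in Wl ->
    pi_act actQ Wl xP (zmul (cZ actQ f) (cZ actQ g)) v
  = \sum_(w <- Wl) \sum_(w' <- Wl)
      (YI actQ xq (I w) f * actQ u (YI actQ xq (I w') g)
       * pi_act actQ Wl xP (zmul (zeta actQ xq Wl I w)
                 (odot actQ u (zeta actQ xq Wl I w'))) v).
Proof.
move=> u_W v_W; have [u_unit u'_W] := unitmx_invmx_in Phi_neq0 WlP u_W.
rewrite /pi_act; under [RHS]eq_bigr do under eq_bigr do rewrite big_distrr.
under [RHS]eq_bigr do rewrite exchange_big.
rewrite [RHS]exchange_big; apply: eq_big_seq => y y_W /=.
have vy_W : v *m y \in Wl by rewrite mulmx_in.
have vyg_E : actQ (v *m y) g = actQ u (actQ (invmx u *m (v *m y)) g).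
  by rewrite -act_mulmx ?mulKVmx ?mulmx_in.
rewrite /zmul /cZ /odot {1}(act_zeta_expansion f vy_W) vyg_E.
rewrite (act_zeta_expansion g) ?mulmx_in // act_sum // big_distrl big_distrr /=.
apply: eq_bigr => w _; rewrite big_distrr big_distrr /=; apply: eq_bigr => w' _.
by rewrite actM //; ring.
Qed.

End DemazureOperators.

Theorem theorem4p4 (R : realType) (m : nat) (Phi Pi : seq 'cV[R]_m)
  (Wl : seq 'M[R]_m) (I : 'M[R]_m -> seq 'cV[R]_m)
  (S : comPzRingType) (act : 'M[R]_m -> S -> S) (x : 'cV[R]_m -> S)
  (Q : comUnitRingType) (j : {rmorphism S -> Q}) (actQ : 'M[R]_m -> Q -> Q) :
  is_root_system Phi ->
  is_simple_system Phi Pi ->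
  enumW Phi Wl ->
  (forall w, w \in Wl -> reduced_word Pi (I w) w) ->
  is_W_action Wl act ->
  (forall w a, w \in Wl -> a \in Phi -> act w (x a) = x (w *m a)) ->
  (forall a, a \in Phi -> forall s : S, x a * s = 0 -> s = 0) ->
  (forall a a', pos_root Phi Pi a -> pos_root Phi Pi a' -> a != a' ->
     forall f : S, (exists h, x a' * f = x a * h) -> exists h, f = x a * h) ->
  injective j ->
  is_W_action Wl actQ ->
  (forall w s, w \in Wl -> j (act w s) = actQ w (j s)) ->
  (forall a, a \in Phi -> j (x a) \is a GRing.unit) ->
  (forall q : Q, exists (s : S) (l : seq 'cV[R]_m),
      {subset l <= Phi} /\ q * j (\prod_(a <- l) x a) = j s) ->
  forall (f g : S) (u : 'M[R]_m), u \in Wl ->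
  forall v, v \in Wl ->
    pi_act actQ Wl (xPi (fun a => j (x a)) Phi Pi)
      (zmul (cZ actQ (j f)) (cZ actQ (j g))) v
  = \sum_(w <- Wl) \sum_(w' <- Wl)
      (YI actQ (fun a => j (x a)) (I w) (j f)
       * actQ u (YI actQ (fun a => j (x a)) (I w') (j g))
       * pi_act actQ Wl (xPi (fun a => j (x a)) Phi Pi)
           (zmul (zeta actQ (fun a => j (x a)) Wl I w)
                 (odot actQ u (zeta actQ (fun a => j (x a)) Wl I w'))) v).
Proof.
(* The identity is computed in Q: of the hypotheses on S and j only the invertibility
   of the j (x a) is used. *)
move=> [_ Phi_neq0 _ _] [Pi_Phi _ _] [Wl_uniq WlP] I_reduced _ _ _ _ _ actQ_W _ x_unit _.
move=> f g u u_W v v_W.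
exact: (pi_act_cZ_mul (xq := fun a => j (x a)) Phi_neq0 Pi_Phi Wl_uniq WlP I_reduced
  actQ_W x_unit _ (j f) (j g) u_W v_W).
Qed.
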